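(* Let $A,B$ be non-empty sets, $I$ a non-empty index set, $\{V_i\}_{i\in I}\subseteq\mathcal R(A)$, $\{W_i\}_{i\in I}\subseteq\mathcal R(B)$, $Z\in\mathcal R(A,B)$, and let $R\in\mathcal R(A,B)$ be a solution to $WL^{2\text{-}3}(A,B,I,V_i,W_i,Z)$. Then (a) $R\circ R^{-1}$ is a solution to $WL^{1\text{-}4}(A,I,V_i,Z\circ Z^{-1})$; (b) $R^{-1}\circ R$ is a solution to $WL^{1\text{-}4}(B,I,W_i,Z^{-1}\circ Z)$.
   Context: $\mathcal L=(L,\wedge,\vee,\otimes,\to,0,1)$ is a complete residuated lattice. For non-empty sets $X,Y$, $\mathcal R(X,Y)$ is the set of fuzzy relations $X\times Y\to L$, $\mathcal R(X)=\mathcal R(X,X)$, ordered pointwise; $R^{-1}(y,x)=R(x,y)$; $(R\circ S)(x,t)=\bigvee_{y}R(x,y)\otimes S(y,t)$. $WL^{2\text{-}3}(A,B,I,V_i,W_i,Z)$ (unknown $U\in\mathcal R(A,B)$): $U^{-1}\circ V_i\le W_i\circ U^{-1}$ and $U\circ W_i\le V_i\circ U$ for all $i\in I$, and $U\le Z$. For a non-empty set $X$, $\{V_i\}\subseteq\mathcal R(X)$, $W\in\mathcal R(X)$, $WL^{1\text{-}4}(X,I,V_i,W)$ (unknown $U\in\mathcal R(X)$): $U\circ V_i\le V_i\circ U$ and $U^{-1}\circ V_i\le V_i\circ U^{-1}$ for all $i\in I$, and $U\le W$, $U^{-1}\le W$. *)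

(** Complete residuated lattice (L, /\, \/, (x), ->, 0, 1):
    - (L, <=) is a complete lattice (every subset has a supremum and an infimum),
      with binary meet/join, bottom 0 and top 1;
    - (L, (x), 1) is a commutative monoid;
    - adjunction: x (x) y <= z  <->  x <= y -> z. *)
Record CRL := {
  car :> Type;
  le : car -> car -> Prop;
  meet : car -> car -> car;
  join : car -> car -> car;
  mul : car -> car -> car;
  res : car -> car -> car;
  bot : car;
  top : car;
  sup : (car -> Prop) -> car;
  inf : (car -> Prop) -> car;
  le_refl : forall x, le x x;
  le_trans : forall x y z, le x y -> le y z -> le x z;
  le_antisym : forall x y, le x y -> le y x -> x = y;
  sup_ub : forall (S : car -> Prop) x, S x -> le x (sup S);
  sup_least : forall (S : car -> Prop) u, (forall x, S x -> le x u) -> le (sup S) u;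
  inf_lb : forall (S : car -> Prop) x, S x -> le (inf S) x;
  inf_greatest : forall (S : car -> Prop) l, (forall x, S x -> le l x) -> le l (inf S);
  meet_lb1 : forall x y, le (meet x y) x;
  meet_lb2 : forall x y, le (meet x y) y;
  meet_greatest : forall x y z, le z x -> le z y -> le z (meet x y);
  join_ub1 : forall x y, le x (join x y);
  join_ub2 : forall x y, le y (join x y);
  join_least : forall x y z, le x z -> le y z -> le (join x y) z;
  bot_le : forall x, le bot x;
  le_top : forall x, le x top;
  mul_assoc : forall x y z, mul x (mul y z) = mul (mul x y) z;
  mul_comm : forall x y, mul x y = mul y x;
  mul_1 : forall x, mul x top = x;
  adjunction : forall x y z, le (mul x y) z <-> le x (res y z)
}.

Definition frel (L : CRL) (X Y : Type) := X -> Y -> L.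

Definition rle {L : CRL} {X Y : Type} (R S : frel L X Y) : Prop :=
  forall x y, le L (R x y) (S x y).

Definition rinv {L : CRL} {X Y : Type} (R : frel L X Y) : frel L Y X :=
  fun y x => R x y.

Definition rcomp {L : CRL} {X Y T : Type} (R : frel L X Y) (S : frel L Y T)
  : frel L X T :=
  fun x t => sup L (fun z => exists y : Y, z = mul L (R x y) (S y t)).

Definition WL23 {L : CRL} {A B I : Type} (V : I -> frel L A A) (W : I -> frel L B B)
  (Z : frel L A B) (U : frel L A B) : Prop :=
  (forall i, rle (rcomp (rinv U) (V i)) (rcomp (W i) (rinv U))) /\
  (forall i, rle (rcomp U (W i)) (rcomp (V i) U)) /\
  rle U Z.

Definition WL14 {L : CRL} {X I : Type} (V : I -> frel L X X) (W : frel L X X)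
  (U : frel L X X) : Prop :=
  (forall i, rle (rcomp U (V i)) (rcomp (V i) U)) /\
  (forall i, rle (rcomp (rinv U) (V i)) (rcomp (V i) (rinv U))) /\
  rle U W /\ rle (rinv U) W.


(* R o R^-1 is symmetric and dominated by Z o Z^-1, and it commutes with each
   V_i because V_i can be pushed through R (as W_i) and back through R^-1:
   R o R^-1 o V_i <= R o W_i o R^-1 <= V_i o R o R^-1.  Part (b) is part (a)
   for R^-1, which solves the problem with the roles of V_i and W_i swapped. *)

Section FuzzyRelations.
Variable L : CRL.

Lemma mul_le_l (x y z : L) : le L x y -> le L (mul L x z) (mul L y z).
Proof.
  intro Hxy. apply adjunction. eapply le_trans; [exact Hxy |].
  apply adjunction, le_refl.
Qed.

Lemma mul_le_r (x y z : L) : le L x y -> le L (mul L z x) (mul L z y).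
Proof. intro Hxy. rewrite (mul_comm L z x), (mul_comm L z y). now apply mul_le_l. Qed.

Lemma mul_sup_le_l {Y : Type} (f : Y -> L) (x u : L) :
  (forall y, le L (mul L (f y) x) u) ->
  le L (mul L (sup L (fun z => exists y, z = f y)) x) u.
Proof.
  intro Hf. apply adjunction, sup_least. intros z [y ->].
  apply adjunction, Hf.
Qed.

Lemma mul_sup_le_r {Y : Type} (f : Y -> L) (x u : L) :
  (forall y, le L (mul L x (f y)) u) ->
  le L (mul L x (sup L (fun z => exists y, z = f y))) u.
Proof.
  intro Hf. rewrite mul_comm. apply mul_sup_le_l.
  intro y. rewrite mul_comm. apply Hf.
Qed.

Lemma rcomp_le {X Y T : Type} (R : frel L X Y) (S : frel L Y T) x t u :
  (forall y, le L (mul L (R x y) (S y t)) u) -> le L (rcomp R S x t) u.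
Proof. intro H. apply sup_least. intros z [y ->]. apply H. Qed.

Lemma le_rcomp {X Y T : Type} (R : frel L X Y) (S : frel L Y T) x t y m :
  le L m (mul L (R x y) (S y t)) -> le L m (rcomp R S x t).
Proof. intro H. eapply le_trans; [exact H |]. apply sup_ub. now exists y. Qed.

Lemma rle_refl {X Y : Type} (R : frel L X Y) : rle R R.
Proof. intros x y. apply le_refl. Qed.

Lemma rle_trans {X Y : Type} (R S T : frel L X Y) : rle R S -> rle S T -> rle R T.
Proof. intros HRS HST x y. eapply le_trans; [apply HRS | apply HST]. Qed.

Lemma rcomp_mono {X Y T : Type} (R R' : frel L X Y) (S S' : frel L Y T) :
  rle R R' -> rle S S' -> rle (rcomp R S) (rcomp R' S').
Proof.
  intros HR HS x t. apply rcomp_le. intro y. apply (le_rcomp _ _ _ _ y).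
  eapply le_trans; [apply mul_le_l, HR | apply mul_le_r, HS].
Qed.

Lemma rcompA_le {X Y T U : Type} (R : frel L X Y) (S : frel L Y T) (Q : frel L T U) :
  rle (rcomp (rcomp R S) Q) (rcomp R (rcomp S Q)).
Proof.
  intros x u. apply rcomp_le. intro t. apply mul_sup_le_l. intro y.
  rewrite <- mul_assoc. apply (le_rcomp _ _ _ _ y), mul_le_r.
  apply (le_rcomp _ _ _ _ t), le_refl.
Qed.

Lemma rcompA_ge {X Y T U : Type} (R : frel L X Y) (S : frel L Y T) (Q : frel L T U) :
  rle (rcomp R (rcomp S Q)) (rcomp (rcomp R S) Q).
Proof.
  intros x u. apply rcomp_le. intro y. apply mul_sup_le_r. intro t.
  rewrite mul_assoc. apply (le_rcomp _ _ _ _ t), mul_le_l.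
  apply (le_rcomp _ _ _ _ y), le_refl.
Qed.

Lemma rinv_mono {X Y : Type} (R S : frel L X Y) : rle R S -> rle (rinv R) (rinv S).
Proof. intros H y x. apply H. Qed.

Lemma rinv_rcomp_self_le {X Y : Type} (R : frel L X Y) :
  rle (rinv (rcomp R (rinv R))) (rcomp R (rinv R)).
Proof.
  intros x x'. apply rcomp_le. intro y.
  apply (le_rcomp _ _ _ _ y). rewrite mul_comm. apply le_refl.
Qed.

Lemma rcomp_commute_of_intertwine {X Y : Type} (P : frel L X Y) (Q : frel L Y X)
    (V : frel L X X) (W : frel L Y Y) :
  rle (rcomp Q V) (rcomp W Q) -> rle (rcomp P W) (rcomp V P) ->
  rle (rcomp (rcomp P Q) V) (rcomp V (rcomp P Q)).
Proof.
  intros HQ HP.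
  apply (rle_trans _ (rcomp P (rcomp Q V))); [apply rcompA_le |].
  apply (rle_trans _ (rcomp P (rcomp W Q))); [apply rcomp_mono; [apply rle_refl | exact HQ] |].
  apply (rle_trans _ (rcomp (rcomp P W) Q)); [apply rcompA_ge |].
  apply (rle_trans _ (rcomp (rcomp V P) Q)); [apply rcomp_mono; [exact HP | apply rle_refl] |].
  apply rcompA_le.
Qed.

(* A symmetric U commuting with every V_i also commutes with U^-1 = U. *)
Lemma WL14_of_symmetric {X I : Type} (V : I -> frel L X X) (W U : frel L X X) :
  rle (rinv U) U -> (forall i, rle (rcomp U (V i)) (rcomp (V i) U)) -> rle U W ->
  WL14 V W U.
Proof.
  intros Hsym Hcomm HW. repeat split; try assumption.
  - intro i.
    apply (rle_trans _ (rcomp U (V i))); [apply rcomp_mono; [exact Hsym | apply rle_refl] |].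
    apply (rle_trans _ (rcomp (V i) U)); [apply Hcomm |].
    apply rcomp_mono; [apply rle_refl | exact (rinv_mono _ _ Hsym)].
  - exact (rle_trans _ _ _ Hsym HW).
Qed.

Lemma WL23_rinv {A B I : Type} (V : I -> frel L A A) (W : I -> frel L B B)
    (Z R : frel L A B) :
  WL23 V W Z R -> WL23 W V (rinv Z) (rinv R).
Proof. intros [HV [HW HZ]]. split; [exact HW | split; [exact HV | exact (rinv_mono _ _ HZ)]]. Qed.

Lemma WL14_rcomp_rinv_of_WL23 {A B I : Type} (V : I -> frel L A A) (W : I -> frel L B B)
    (Z R : frel L A B) :
  WL23 V W Z R -> WL14 V (rcomp Z (rinv Z)) (rcomp R (rinv R)).
Proof.
  intros [HV [HW HZ]]. apply WL14_of_symmetric.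
  - apply rinv_rcomp_self_le.
  - intro i. exact (rcomp_commute_of_intertwine _ _ _ _ (HV i) (HW i)).
  - exact (rcomp_mono _ _ _ _ HZ (rinv_mono _ _ HZ)).
Qed.

End FuzzyRelations.

Theorem proposition7p1 (L : CRL) (A B I : Type) (a0 : A) (b0 : B) (i0 : I)
  (V : I -> frel L A A) (W : I -> frel L B B) (Z : frel L A B) (R : frel L A B) :
  WL23 V W Z R ->
  WL14 V (rcomp Z (rinv Z)) (rcomp R (rinv R)) /\
  WL14 W (rcomp (rinv Z) Z) (rcomp (rinv R) R).
Proof.
  intro HR. split.
  - exact (WL14_rcomp_rinv_of_WL23 L V W Z R HR).
  - exact (WL14_rcomp_rinv_of_WL23 L W V (rinv Z) (rinv R) (WL23_rinv L V W Z R HR)).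
Qed.
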